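(* Place the almost positive roots of type $C_n$ in the off-diagonal entries of an $(n+1)\times(n+1)$ array via: entry $(1,j)$ ($2\le j\le n+1$) is $-\alpha_{j-1}$; entry $(i,j)$ with $2\le i<j$ is $\varepsilon_{i-1}-\varepsilon_{j-1}$; entry $(i,j)$ with $i>j$ is $\varepsilon_j+\varepsilon_{i-1}$. For any pairwise distinct $i,j,k\in[1,n+1]$, the almost positive roots in the $(i,j)$- and $(j,k)$-entries are not $\underline c$-compatible.
   Context: Type $C_n$: standard basis $\varepsilon_i$ of $\mathbb{R}^n$, simple roots $\alpha_i=\varepsilon_i-\varepsilon_{i+1}$ ($i<n$), $\alpha_n=2\varepsilon_n$, $\Pi$ the simple roots, $\Phi_+=\{\varepsilon_i\pm\varepsilon_j:i<j\}\cup\{2\varepsilon_i\}$, $\Phi_{\ge-1}=\Phi_+\sqcup(-\Pi)$. With simple reflections $s_i$ and $c=s_1\cdots s_n$, $\tau:\Phi_{\ge-1}\to\Phi_{\ge-1}$ is $\tau(-\alpha_i)=s_1\cdots s_{i-1}(\alpha_i)$, $\tau(s_n\cdots s_{i+1}(\alpha_i))=-\alpha_i$, $\tau(\alpha)=c(\alpha)$ otherwise. The $\underline c$-compatibility degree is the unique $\tau$-invariant function $\Phi_{\ge-1}^2\to\mathbb{Z}$ with $(-\alpha\|_{\underline c}-\alpha')=0$ for $\alpha,\alpha'\in\Pi$ and $(-\alpha\|_{\underline c}\beta)=[\beta:\alpha]$ (coefficient of $\alpha$ in $\beta$) for $\alpha\in\Pi,\beta\in\Phi_+$; two roots are $\underline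 c$-compatible if their degree is $0$. *)

(* Type C_n root system realized in Z^n = {ffun 'I_n -> int}.
   Coordinates are 0-indexed: coordinate k (0 <= k < n) is epsilon_{k+1}. *)
From HB Require Import structures.
From mathcomp Require Import all_boot all_order all_algebra.
Set Implicit Arguments. Unset Strict Implicit. Unset Printing Implicit Defensive.
Import Order.TTheory GRing.Theory Num.Theory.
Local Open Scope ring_scope.

Definition vec (n : nat) := {ffun 'I_n -> int}.

(* coordinate k of v (0 if k >= n) *)
Definition coord n (v : vec n) (k : nat) : int :=
  match @insub _ (fun j => j < n)%N 'I_n k with Some j => v j | None => 0 end.

Definition eps n (k : nat) : vec n := [ffun j : 'I_n => ((val j == k) : nat)%:Z].

Definition alpha n (k : nat) : vec n :=
  if (k.+1 < n)%N then eps n k - eps n k.+1 else eps n k *+ 2.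

Definition sref n (k : nat) (v : vec n) : vec n :=
  [ffun j : 'I_n =>
     if (k.+1 < n)%N then
       (if val j == k then coord v k.+1 else if val j == k.+1 then coord v k else v j)
     else if val j == k then - v j else v j].

Definition sprod n (l : seq nat) (v : vec n) : vec n := foldr (@sref n) v l.

Definition cox n (v : vec n) : vec n := sprod (iota 0 n) v.

Definition pos_root n (v : vec n) : bool :=
  [exists i : 'I_n, exists j : 'I_n,
     (i < j)%N && ((v == eps n i - eps n j) || (v == eps n i + eps n j))]
  || [exists i : 'I_n, v == eps n i *+ 2].

Definition neg_simple n (v : vec n) : bool := [exists i : 'I_n, v == - alpha n i].

Definition almost_pos n (v : vec n) : bool := pos_root v || neg_simple v.

Definition tau n (v : vec n) : vec n :=
  match [pick i : 'I_n | v == - alpha n i] with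
  | Some i => sprod (iota 0 i) (alpha n i)
  | None =>
    match [pick i : 'I_n | v == sprod (rev (iota i.+1 (n - i.+1))) (alpha n i)] with
    | Some i => - alpha n i
    | None => cox v
    end
  end.

(* f is the c-compatibility degree of type C_n: it is tau-invariant on
   Phi_{>=-1}^2, vanishes on pairs of negative simple roots, and
   (-alpha_i || beta) is the coefficient of alpha_i in beta for beta positive. *)
Definition is_compat_degree n (f : vec n -> vec n -> int) : Prop :=
  [/\ (forall a b, almost_pos a -> almost_pos b -> f (tau a) (tau b) = f a b),
      (forall i j : 'I_n, f (- alpha n i) (- alpha n j) = 0)
    & (forall (i : 'I_n) (b : vec n) (c : {ffun 'I_n -> int}),
         pos_root b -> b = \sum_(j < n) alpha n j *~ c j ->
         f (- alpha n i) b = c i)].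

(* the (n+1)x(n+1) array, 1-indexed entries (i,j), i <> j *)
Definition entry n (i j : nat) : vec n :=
  if i == 1%N then - alpha n (j - 2)
  else if (i < j)%N then eps n (i - 2) - eps n (j - 2)
  else eps n (j - 1) + eps n (i - 2).

(* The map tau permutes the array by a cyclic shift of both indices: it sends
   the entry in position (i, j) to the one in position (i+1, j+1), where n+1 is
   followed by 1.  On the first row this is tau(-alpha_i) = s_1 ... s_(i-1)(alpha_i),
   on the last row tau(eps_i + eps_n) = -alpha_i, and elsewhere tau is the
   Coxeter element c, which maps eps_a to eps_(a+1) and eps_n to -eps_1.  As the
   compatibility degree is tau-invariant, shifting the indices reduces the claim
   to i = 1, where (-alpha_(j-1) || beta) is the coefficient of alpha_(j-1) in the
   positive root beta in position (j, k); expanding beta in simple roots shows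
   that this coefficient is positive. *)

From Pilot Require Import Defs.
From mathcomp Require Import all_boot all_order all_algebra zify.
Import Order.TTheory GRing.Theory Num.Theory.
Set Implicit Arguments. Unset Strict Implicit. Unset Printing Implicit Defensive.
Local Open Scope ring_scope.

Lemma iota0_split m a : (a < m)%N -> iota 0 m = iota 0 a ++ a :: iota a.+1 (m - a.+1).
Proof.
by move=> lt_am; rewrite -[a :: _]/(iota a (m - a.+1).+1) subnSK // -iotaD subnKC // ltnW.
Qed.

Section Reflections.
Variable n : nat.
Implicit Types (u v : vec n) (s : seq nat).

Lemma coord_lt v k (lt_kn : (k < n)%N) : Defs.coord v k = v (Ordinal lt_kn).
Proof. by rewrite /Defs.coord insubT /=; congr (v _); apply: val_inj. Qed.

Lemma coordD u v k : Defs.coord (u + v) k = Defs.coord u k + Defs.coord v k.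
Proof. by rewrite /Defs.coord; case: insubP => // *; rewrite ffunE. Qed.

Lemma coordN v k : Defs.coord (- v) k = - Defs.coord v k.
Proof. by rewrite /Defs.coord; case: insubP => // *; rewrite ffunE. Qed.

Lemma srefD k u v : sref k (u + v) = sref k u + sref k v.
Proof.
by apply/ffunP=> x; rewrite !ffunE !coordD; repeat case: ifP => _; rewrite ?ffunE ?opprD.
Qed.

Lemma srefN k v : sref k (- v) = - sref k v.
Proof. by apply/ffunP=> x; rewrite !ffunE !coordN; repeat case: ifP => _; rewrite ?ffunE. Qed.

Lemma sprodD s u v : sprod s (u + v) = sprod s u + sprod s v.
Proof. by elim: s => //= k s IH; rewrite IH srefD. Qed.

Lemma sprodN s v : sprod s (- v) = - sprod s v.
Proof. by elim: s => //= k s IH; rewrite IH srefN. Qed.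

Lemma sprodB s u v : sprod s (u - v) = sprod s u - sprod s v.
Proof. by rewrite sprodD sprodN. Qed.

Lemma sprod_cat s t v : sprod (s ++ t) v = sprod s (sprod t v).
Proof. exact: foldr_cat. Qed.

Definition swap_adj (k a : nat) : nat :=
  if a == k then k.+1 else if a == k.+1 then k else a.

Lemma swap_adjL k : swap_adj k k = k.+1.
Proof. by rewrite /swap_adj eqxx. Qed.

Lemma swap_adjR k : swap_adj k k.+1 = k.
Proof. by rewrite /swap_adj eqxx; case: eqP; lia. Qed.

Lemma sref_eps k a : (k.+1 < n)%N -> sref k (eps n a) = eps n (swap_adj k a).
Proof.
move=> lt_k1n; apply/ffunP=> x; rewrite !ffunE lt_k1n.
rewrite (coord_lt _ lt_k1n) (coord_lt _ (ltnW lt_k1n)) !ffunE /= /swap_adj.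
do !case: eqP; lia.
Qed.

Lemma sref_eps_last k a : ~~ (k.+1 < n)%N ->
  sref k (eps n a) = if a == k then - eps n a else eps n a.
Proof.
move=> ge_k1n; apply/ffunP=> x; rewrite !ffunE (negbTE ge_k1n).
case: ifP => /eqP; rewrite ?ffunE; case: ifP => /eqP; rewrite ?ffunE; lia.
Qed.

Lemma sref_eps_fix k a : a != k -> a != k.+1 -> sref k (eps n a) = eps n a.
Proof.
move=> ne_ak ne_ak1; case: (ltnP k.+1 n) => [lt_k1n | ge_k1n].
  by rewrite sref_eps // /swap_adj (negbTE ne_ak) (negbTE ne_ak1).
by rewrite sref_eps_last -?leqNgt // (negbTE ne_ak).
Qed.

Lemma sprod_iota_eps_fix b m a : (a < b)%N || (b + m < a)%N ->
  sprod (iota b m) (eps n a) = eps n a.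
Proof.
elim: m b => //= m IH b out_a; rewrite IH; last by lia.
by apply: sref_eps_fix; lia.
Qed.

Lemma sprod_rev_iota_eps_fix b m a : (a < b)%N || (b + m < a)%N ->
  sprod (rev (iota b m)) (eps n a) = eps n a.
Proof.
elim: m b => // m IH b out_a; rewrite /= rev_cons -cats1 sprod_cat /=.
by rewrite sref_eps_fix ?IH //; lia.
Qed.

Lemma sprod_iota_eps_down b m : (b + m < n)%N -> sprod (iota b m) (eps n (b + m)) = eps n b.
Proof.
elim: m b => [|m IH] b lt_bmn /=; first by rewrite addn0.
rewrite -addSnnS IH; last by rewrite addSnnS.
by rewrite sref_eps ?swap_adjR //; lia.
Qed.

Lemma sprod_rev_iota_eps_up b m : (b + m < n)%N -> sprod (rev (iota b m)) (eps n b) = eps n (b + m).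
Proof.
elim: m b => [|m IH] b lt_bmn /=; first by rewrite addn0.
by rewrite rev_cons -cats1 sprod_cat /= sref_eps ?swap_adjL ?IH ?addSnnS //; lia.
Qed.

Lemma coxD u v : cox (u + v) = cox u + cox v.
Proof. exact: sprodD. Qed.

Lemma coxB u v : cox (u - v) = cox u - cox v.
Proof. exact: sprodB. Qed.

Lemma cox_eps a : (a.+1 < n)%N -> cox (eps n a) = eps n a.+1.
Proof.
move=> lt_a1n; rewrite /cox (iota0_split (ltnW lt_a1n)) sprod_cat /=.
rewrite sprod_iota_eps_fix; last by lia.
by rewrite sref_eps // swap_adjL sprod_iota_eps_fix //; lia.
Qed.

Lemma cox_eps_last : (0 < n)%N -> cox (eps n n.-1) = - eps n 0.
Proof.
move=> n_gt0; have lt_n1n : (n.-1 < n)%N by lia.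
rewrite /cox (iota0_split lt_n1n) sprod_cat (_ : n - n.-1.+1 = 0)%N /=; last by lia.
rewrite sref_eps_last ?eqxx; last by lia.
by rewrite sprodN -{1}[n.-1]add0n sprod_iota_eps_down //; lia.
Qed.
End Reflections.

Section Tau.
Variable n : nat.
Implicit Type v : vec n.

Lemma alpha_lt i : (i.+1 < n)%N -> alpha n i = eps n i - eps n i.+1.
Proof. by rewrite /alpha => ->. Qed.

Lemma alpha_last : alpha n n.-1 = eps n n.-1 *+ 2.
Proof. by rewrite /alpha ifN //; lia. Qed.

Lemma sprod_iota_alpha i : (i.+1 < n)%N -> sprod (iota 0 i) (alpha n i) = eps n 0 - eps n i.+1.
Proof.
move=> lt_i1n; rewrite alpha_lt // sprodB -{1}[i]add0n sprod_iota_eps_down; last by lia.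
by rewrite sprod_iota_eps_fix //; lia.
Qed.

Lemma sprod_iota_alpha_last : (0 < n)%N -> sprod (iota 0 n.-1) (alpha n n.-1) = eps n 0 *+ 2.
Proof.
by move=> n_gt0; rewrite alpha_last !mulr2n sprodD -{1}[n.-1]add0n sprod_iota_eps_down //; lia.
Qed.

Lemma sprod_rev_iota_alpha (i : 'I_n) :
  sprod (rev (iota i.+1 (n - i.+1))) (alpha n i) = eps n i + eps n n.-1.
Proof.
have [lt_i1n | ge_i1n] := ltnP i.+1 n; last first.
  have -> : i = n.-1 :> nat by have := ltn_ord i; lia.
  by rewrite alpha_last (_ : n - n.-1.+1 = 0)%N ?mulr2n //; lia.
rewrite alpha_lt // sprodB sprod_rev_iota_eps_fix; last by lia.
rewrite -(subnSK lt_i1n) -[(n - i.+2).+1]addn1 iotaD rev_cat /= sprod_rev_iota_eps_up; last by lia.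
rewrite (_ : i.+1 + (n - i.+2) = n.-1)%N; last by lia.
by rewrite sref_eps_last ?eqxx ?opprK //; lia.
Qed.

Lemma eps_inj : injective (fun i : 'I_n => eps n i).
Proof.
move=> i j /(congr1 (fun v : vec n => v i)).
by rewrite !ffunE eqxx; case: eqP => // /val_inj.
Qed.

Lemma alpha_diag_gt0 (i : 'I_n) : 0 < alpha n i i.
Proof. by rewrite /alpha; case: ifP => _; rewrite !ffunE ?mulr2n ?ffunE /=; lia. Qed.

Lemma alpha_gt0_diag (i x : 'I_n) : 0 < alpha n i x -> x = i.
Proof.
move=> alpha_ix_gt0; apply: val_inj; move: alpha_ix_gt0.
by rewrite /alpha; case: ifP => _; rewrite !ffunE ?mulr2n ?ffunE /=; lia.
Qed.

Lemma alpha_inj : injective (fun i : 'I_n => alpha n i).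
Proof. by move=> i j eq_ij; apply: alpha_gt0_diag; rewrite -eq_ij alpha_diag_gt0. Qed.

Lemma nonneg_neq_neg_alpha v (i : 'I_n) : (forall x, 0 <= v x) -> v != - alpha n i.
Proof.
move=> v_ge0; apply/eqP => v_eq; have := v_ge0 i.
by rewrite v_eq ffunE oppr_ge0 leNgt alpha_diag_gt0.
Qed.

Lemma eps_add_neq_neg_alpha a b (i : 'I_n) : eps n a + eps n b != - alpha n i.
Proof. by apply: nonneg_neq_neg_alpha => x; rewrite !ffunE. Qed.

Lemma eps_sub_neq_neg_alpha a b (i : 'I_n) : (a < b < n)%N -> eps n a - eps n b != - alpha n i.
Proof.
move=> lt_abn; apply/eqP => v_eq; have := congr1 (fun v : vec n => v i) v_eq.
rewrite /alpha in v_eq *; case: ifP v_eq => [lt_i1n | _]; last first.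
  by rewrite !ffunE ?mulr2n ?ffunE /=; lia.
move=> /(congr1 (fun v : vec n => v (Ordinal lt_i1n))); rewrite !ffunE /=; lia.
Qed.

Lemma eps_sub_neq_eps_add_last a b (i : 'I_n) : (a < b < n)%N ->
  eps n a - eps n b != eps n i + eps n n.-1.
Proof.
case/andP=> lt_ab lt_bn; apply/eqP => /(congr1 (fun v : vec n => v (Ordinal lt_bn))).
by rewrite !ffunE /=; lia.
Qed.

Lemma eps_add_neq_eps_add_last a b (i : 'I_n) : (a < n.-1)%N -> (b < n.-1)%N ->
  eps n a + eps n b != eps n i + eps n n.-1.
Proof.
move=> lt_a lt_b; have lt_n1n : (n.-1 < n)%N by lia.
by apply/eqP => /(congr1 (fun v : vec n => v (Ordinal lt_n1n))); rewrite !ffunE /=; lia.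
Qed.

Lemma tau_neg_alpha (i : 'I_n) : tau (- alpha n i) = sprod (iota 0 i) (alpha n i).
Proof.
rewrite /tau; case: pickP => [j /eqP/oppr_inj/alpha_inj -> // | /(_ i)].
by rewrite eqxx.
Qed.

Lemma tau_eps_add_last (i : 'I_n) : tau (eps n i + eps n n.-1) = - alpha n i.
Proof.
rewrite /tau; case: pickP => [j | _]; first by rewrite (negbTE (eps_add_neq_neg_alpha _ _ _)).
case: pickP => [j | /(_ i)]; last by rewrite sprod_rev_iota_alpha eqxx.
by rewrite sprod_rev_iota_alpha => /eqP/addIr/eps_inj ->.
Qed.

Lemma tau_cox v : (forall i : 'I_n, v != - alpha n i) ->
  (forall i : 'I_n, v != eps n i + eps n n.-1) -> tau v = cox v.
Proof.
move=> not_neg not_last; rewrite /tau.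
case: pickP => [i | _]; first by rewrite (negbTE (not_neg i)).
by case: pickP => [i | //]; rewrite sprod_rev_iota_alpha (negbTE (not_last i)).
Qed.
End Tau.

Definition cyc_succ n (i : nat) : nat := if i == n.+1 then 1%N else i.+1.

Section Array.
Variable n : nat.

Lemma cyc_succ_lt i : (i <= n)%N -> cyc_succ n i = i.+1.
Proof. by rewrite /cyc_succ; case: eqP; lia. Qed.

Lemma cyc_succ_last : cyc_succ n n.+1 = 1%N.
Proof. by rewrite /cyc_succ eqxx. Qed.

Lemma cyc_succ_range i : (0 < i <= n.+1)%N -> (0 < cyc_succ n i <= n.+1)%N.
Proof. by rewrite /cyc_succ; case: eqP; lia. Qed.

Lemma cyc_succ_neq i j : (0 < i <= n.+1)%N -> (0 < j <= n.+1)%N -> i != j ->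
  cyc_succ n i != cyc_succ n j.
Proof. by rewrite /cyc_succ; case: (i =P n.+1); case: (j =P n.+1); lia. Qed.

Lemma entry1 j : entry n 1 j = - alpha n (j - 2).
Proof. by []. Qed.

Lemma entry_lt i j : (1 < i < j)%N -> entry n i j = eps n (i - 2) - eps n (j - 2).
Proof. by rewrite /entry; case: eqP => [|_] lt_1ij; [lia | rewrite ifT //; lia]. Qed.

Lemma entry_gt i j : (0 < j < i)%N -> entry n i j = eps n (j - 1) + eps n (i - 2).
Proof. by rewrite /entry; case: eqP => [|_] lt_0ji; [lia | rewrite ifN //; lia]. Qed.

Lemma tau_entry_first_row j : (1 < j <= n.+1)%N -> tau (entry n 1 j) = entry n 2 (cyc_succ n j).
Proof.
move=> j_range; have lt_j2n : (j - 2 < n)%N by lia.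
rewrite entry1 -[(j - 2)%N]/(nat_of_ord (Ordinal lt_j2n)) tau_neg_alpha /= /cyc_succ.
case: eqP => [-> | ne_jn1].
  rewrite entry_gt // (_ : n.+1 - 2 = n.-1)%N; last by lia.
  by rewrite sprod_iota_alpha_last ?mulr2n //; lia.
rewrite sprod_iota_alpha ?entry_lt; try congr (_ - eps n _); lia.
Qed.

Lemma tau_entry_upper i j : (1 < i < j)%N -> (j <= n.+1)%N ->
  tau (entry n i j) = entry n (cyc_succ n i) (cyc_succ n j).
Proof.
move=> lt_1ij le_jn1; rewrite entry_lt // tau_cox; first last.
- by move=> l; apply: eps_sub_neq_eps_add_last; lia.
- by move=> l; apply: eps_sub_neq_neg_alpha; lia.
rewrite coxB cox_eps ?(cyc_succ_lt (i := i)); try lia.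
have [le_jn | gt_jn] := leqP j n.
  by rewrite cox_eps ?cyc_succ_lt ?entry_lt; try congr (eps n _ - eps n _); lia.
have -> : j = n.+1 by lia.
rewrite cyc_succ_last (_ : n.+1 - 2 = n.-1)%N ?cox_eps_last ?opprK ?entry_gt; try lia.
by rewrite addrC; congr (eps n _ + eps n _); lia.
Qed.

Lemma tau_entry_lower i j : (0 < j < i)%N -> (i <= n.+1)%N ->
  tau (entry n i j) = entry n (cyc_succ n i) (cyc_succ n j).
Proof.
move=> lt_0ji le_in1; rewrite entry_gt // (cyc_succ_lt (i := j)); last by lia.
have [le_in | gt_in] := leqP i n.
  rewrite tau_cox; first last.
  - by move=> l; apply: eps_add_neq_eps_add_last; lia.
  - by move=> l; apply: eps_add_neq_neg_alpha.
  by rewrite coxD !cox_eps ?cyc_succ_lt ?entry_gt; try congr (eps n _ + eps n _); lia.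
have -> : i = n.+1 by lia.
have lt_j1n : (j - 1 < n)%N by lia.
rewrite (_ : n.+1 - 2 = n.-1)%N; last by lia.
rewrite -[(j - 1)%N]/(nat_of_ord (Ordinal lt_j1n)).
by rewrite tau_eps_add_last cyc_succ_last entry1; congr (- alpha n _); lia.
Qed.

Lemma tau_entry i j : (0 < i <= n.+1)%N -> (0 < j <= n.+1)%N -> i != j ->
  tau (entry n i j) = entry n (cyc_succ n i) (cyc_succ n j).
Proof.
move=> i_range j_range ne_ij; have [eq_i1 | ne_i1] := eqVneq i 1%N.
  by rewrite eq_i1 (cyc_succ_lt (i := 1)) ?tau_entry_first_row //; lia.
by case: (ltngtP i j) => [lt_ij | lt_ji | eq_ij];
  [apply: tau_entry_upper | apply: tau_entry_lower | rewrite eq_ij eqxx in ne_ij]; lia.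
Qed.

Lemma pos_root_eps_sub a b : (a < b < n)%N -> pos_root (eps n a - eps n b).
Proof.
case/andP=> lt_ab lt_bn; have lt_an := ltn_trans lt_ab lt_bn.
apply/orP; left; apply/existsP; exists (Ordinal lt_an); apply/existsP; exists (Ordinal lt_bn).
by rewrite lt_ab eqxx.
Qed.

Lemma pos_root_eps_add a b : (a <= b < n)%N -> pos_root (eps n a + eps n b).
Proof.
case/andP=> le_ab lt_bn; have lt_an := leq_ltn_trans le_ab lt_bn.
have [lt_ab | eq_ab] := ltnP a b.
  apply/orP; left; apply/existsP; exists (Ordinal lt_an); apply/existsP; exists (Ordinal lt_bn).
  by rewrite lt_ab eqxx orbT.
have -> : b = a by lia.
by apply/orP; right; apply/existsP; exists (Ordinal lt_an); rewrite mulr2n.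
Qed.

Lemma pos_root_entry j k : (1 < j <= n.+1)%N -> (0 < k <= n.+1)%N -> j != k ->
  pos_root (entry n j k).
Proof.
move=> j_range k_range ne_jk; case: (ltngtP j k) => [lt_jk | lt_kj | eq_jk].
- by rewrite entry_lt ?pos_root_eps_sub //; lia.
- by rewrite entry_gt ?pos_root_eps_add //; lia.
- by rewrite eq_jk eqxx in ne_jk.
Qed.

Lemma almost_pos_entry i j : (0 < i <= n.+1)%N -> (0 < j <= n.+1)%N -> i != j ->
  almost_pos (entry n i j).
Proof.
move=> i_range j_range ne_ij; have [eq_i1 | ne_i1] := eqVneq i 1%N.
  rewrite eq_i1; have lt_j2n : (j - 2 < n)%N by lia.
  by apply/orP; right; apply/existsP; exists (Ordinal lt_j2n).
by rewrite /almost_pos pos_root_entry //; lia.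
Qed.
End Array.

Definition alpha_comb n (c : {ffun 'I_n -> int}) : vec n := \sum_(l < n) alpha n l *~ c l.

Definition seg_coef n (a b : nat) : {ffun 'I_n -> int} := [ffun l : 'I_n => (a <= l < b)%N : int].

Section SimpleRootCoordinates.
Variable n : nat.

Lemma alpha_combD (c1 c2 : {ffun 'I_n -> int}) :
  alpha_comb (c1 + c2) = alpha_comb c1 + alpha_comb c2.
Proof. by rewrite /alpha_comb -big_split; apply: eq_bigr => l _; rewrite ffunE mulrzDr. Qed.

Lemma alpha_comb_seg_sum a b : (b <= n)%N ->
  alpha_comb (seg_coef n a b) = \sum_(a <= l < b) alpha n l.
Proof.
move=> le_bn; rewrite /alpha_comb.
rewrite (eq_bigr (fun l : 'I_n => if (a <= l < b)%N then alpha n l else 0)); last first.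
  by move=> l _; rewrite ffunE mulrbz.
rewrite -big_mkcond -(big_mkord (fun l => a <= l < b)%N (alpha n)).
by rewrite [RHS](big_nat_widenl _ 0) // [RHS](big_nat_widen _ _ n).
Qed.

Lemma alpha_comb_seg a b : (a <= b < n)%N -> alpha_comb (seg_coef n a b) = eps n a - eps n b.
Proof.
case/andP=> le_ab lt_bn; rewrite alpha_comb_seg_sum ?(ltnW lt_bn) //.
rewrite (eq_big_nat _ _ (F2 := fun l => - eps n l.+1 - (- eps n l))); last first.
  by move=> l l_range; rewrite alpha_lt ?opprK 1?addrC //; lia.
by rewrite telescope_sumr // opprK addrC.
Qed.

Lemma alpha_comb_seg_last : (0 < n)%N -> alpha_comb (seg_coef n n.-1 n) = eps n n.-1 *+ 2.
Proof.
move=> n_gt0; rewrite alpha_comb_seg_sum // big_ltn ?big_geq ?addr0 ?alpha_last //; lia.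
Qed.

Lemma alpha_comb_eps_add a b : (a < n)%N -> (b < n)%N ->
  alpha_comb (seg_coef n a n.-1 + seg_coef n b n.-1 + seg_coef n n.-1 n) = eps n a + eps n b.
Proof.
move=> lt_an lt_bn; rewrite !alpha_combD alpha_comb_seg_last ?alpha_comb_seg; try lia.
by rewrite mulr2n addrACA !subrK.
Qed.
End SimpleRootCoordinates.

Section CompatibilityDegree.
Variables (n : nat) (f : vec n -> vec n -> int).
Hypothesis f_compat : is_compat_degree f.

Lemma compat_first_row_gt0 j k : (1 < j <= n.+1)%N -> (0 < k <= n.+1)%N -> j != k ->
  0 < f (entry n 1 j) (entry n j k).
Proof.
case: f_compat => _ _ coef_neg_alpha j_range k_range ne_jk.
have lt_j2n : (j - 2 < n)%N by lia.
have pos_jk := pos_root_entry j_range k_range ne_jk.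
rewrite entry1 -[(j - 2)%N]/(nat_of_ord (Ordinal lt_j2n)).
case: (ltngtP j k) => [lt_jk | lt_kj | eq_jk]; last by rewrite eq_jk eqxx in ne_jk.
  rewrite (coef_neg_alpha _ _ (seg_coef n (j - 2) (k - 2)) pos_jk) ?ffunE /=; first lia.
  by rewrite -/(alpha_comb _) alpha_comb_seg ?entry_lt //; lia.
rewrite (coef_neg_alpha _ _ (seg_coef n (k - 1) n.-1 + seg_coef n (j - 2) n.-1
                             + seg_coef n n.-1 n) pos_jk) ?ffunE /=; first lia.
by rewrite -/(alpha_comb _) alpha_comb_eps_add ?entry_gt //; lia.
Qed.

Lemma compat_entry_cyc_succ i j k :
  (0 < i <= n.+1)%N -> (0 < j <= n.+1)%N -> (0 < k <= n.+1)%N -> i != j -> j != k ->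
  f (entry n (cyc_succ n i) (cyc_succ n j)) (entry n (cyc_succ n j) (cyc_succ n k)) =
  f (entry n i j) (entry n j k).
Proof.
case: f_compat => tau_inv _ _ i_range j_range k_range ne_ij ne_jk.
by rewrite -!tau_entry // tau_inv // almost_pos_entry.
Qed.

Lemma compat_entry_gt0 i j k :
  (0 < i <= n.+1)%N -> (0 < j <= n.+1)%N -> (0 < k <= n.+1)%N ->
  i != j -> j != k -> i != k -> 0 < f (entry n i j) (entry n j k).
Proof.
move eq_d: (n.+1 - i)%N => d.
elim: d i j k eq_d => [|d IH] i j k eq_d i_range j_range k_range ne_ij ne_jk ne_ik.
  have succ_j_range := cyc_succ_range j_range.
  have := cyc_succ_neq i_range j_range ne_ij.
  rewrite -compat_entry_cyc_succ // (_ : i = n.+1) ?cyc_succ_last => [ne_1j|]; last by lia.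
  by apply: compat_first_row_gt0; rewrite ?cyc_succ_range ?cyc_succ_neq //; lia.
have [eq_i1 | ne_i1] := eqVneq i 1%N.
  by rewrite eq_i1; apply: compat_first_row_gt0; lia.
rewrite -compat_entry_cyc_succ //; apply: IH; rewrite ?cyc_succ_range ?cyc_succ_neq //.
by rewrite cyc_succ_lt; lia.
Qed.
End CompatibilityDegree.

Theorem lemma4p8 (n : nat) (f : vec n -> vec n -> int) :
  is_compat_degree f ->
  forall i j k : nat,
    (1 <= i <= n.+1)%N -> (1 <= j <= n.+1)%N -> (1 <= k <= n.+1)%N ->
    i != j -> j != k -> i != k ->
    f (entry n i j) (entry n j k) != 0.
Proof.
by move=> f_compat *; rewrite lt0r_neq0 // compat_entry_gt0.
Qed.
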